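(* Let $c>0$, $N\ge1$, and let $v=(v_1,\dots,v_N)$ and $Q_i^{jk}=Q_i^{kj}$ ($1\le i,j,k\le N$) be sufficiently regular functions on $\mathcal{K}_{[s_0,s_1]}$. Put $P_i^{jk}:=-\tfrac13 Q_i^{jk}$, $w_i:=v_i+P_i^{jk}(t/s)^2v_jv_k$, $$V_i^0:=\tfrac12\sum_\alpha|\partial_\alpha w_i|^2+\tfrac12c^2w_i^2+P_i^{jk}(t/s)^2v_i\Big(\partial_tv_j\partial_tv_k+\sum_a\partial_av_j\partial_av_k+c^2v_jv_k\Big),$$ $$-V_i^a:=\partial_tw_i\partial_aw_i+P_i^{jk}(t/s)^2v_i\big(\partial_tv_j\partial_av_k+\partial_tv_k\partial_av_j\big),$$ $e_{Q,c}[v]:=2\sum_{i=1}^N\big(V_i^0-(x^a/t)V_i^a\big)$ (summation over repeated $j,k\in\{1,\dots,N\}$ and $a\in\{1,2\}$). There exists $\varepsilon_s>0$ small such that if, pointwise in $\mathcal{K}_{[s_0,s_1]}$, for all $i,j,k$ and $\alpha$, $$|(t/s)^2Q_i^{jk}v_i|+|(t/s)^2Q_i^{jk}v_j|+|(t/s)^2Q_i^{jk}v_k|\le\varepsilon_s,\qquad |(t/s)^2v_j\partial_\alpha Q_i^{jk}|+|(t/s)^2v_k\partial_\alpha Q_i^{jk}|\le\varepsilon_s,$$ then $$\tfrac14 e_{Q,c}[v]\le\sum_{i=1}^Ne_c[v_i]\le 4e_{Q,c}[v].$$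
   Context: Coordinates $(t,x)\in\mathbb{R}^{2+1}$, $r=|x|$, $s=\sqrt{t^2-r^2}$, $\partial_0=\partial_t$. $\mathcal{K}_{[s_0,s_1]}=\{(t,x): t>r+1,\ s_0^2\le t^2-r^2\le s_1^2\}$. For a scalar $u$, $e_c[u]:=|(s/t)\partial_tu|^2+\sum_{a=1,2}|\underline{\partial}_au|^2+c^2u^2$ with $\underline{\partial}_a=(x^a/t)\partial_t+\partial_a$. *)

From Stdlib Require Import Reals Lra.
From Coquelicot Require Import Coquelicot.
Open Scope R_scope.

(* A scalar function on R^{2+1}, in coordinates (t, x1, x2). *)
Definition fn := R -> R -> R -> R.

Fixpoint sumN (n : nat) (f : nat -> R) : R :=
  match n with
  | O => 0
  | S m => sumN m f + f m
  end.

Definition rad (x1 x2 : R) : R := sqrt (x1 ^ 2 + x2 ^ 2).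
Definition sh (t x1 x2 : R) : R := sqrt (t ^ 2 - x1 ^ 2 - x2 ^ 2).

(* the spatial coordinate x^a, a = 1, 2 (encoded as a = 0 -> x1, else x2) *)
Definition xc (a : nat) (x1 x2 : R) : R := match a with O => x1 | _ => x2 end.

Definition pd (alpha : nat) (f : fn) : fn :=
  fun t x1 x2 =>
    match alpha with
    | O => Derive (fun t' => f t' x1 x2) t
    | 1%nat => Derive (fun y => f t y x2) x1
    | _ => Derive (fun y => f t x1 y) x2
    end.

(* spatial partial derivative d_a, a in {1,2}, encoded by a' = a-1 in {0,1} *)
Definition pds (a : nat) (f : fn) : fn := pd (S a) f.

Definition pderivable (f : fn) (t x1 x2 : R) : Prop :=
  ex_derive (fun t' => f t' x1 x2) t /\
  ex_derive (fun y => f t y x2) x1 /\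
  ex_derive (fun y => f t x1 y) x2.

Definition inK (s0 s1 t x1 x2 : R) : Prop :=
  t > rad x1 x2 + 1 /\ s0 ^ 2 <= t ^ 2 - x1 ^ 2 - x2 ^ 2 <= s1 ^ 2.

Definition ts2 : fn := fun t x1 x2 => (t / sh t x1 x2) ^ 2.

Definition e_c (c : R) (u : fn) : fn := fun t x1 x2 =>
  ((sh t x1 x2 / t) * pd 0 u t x1 x2) ^ 2
  + sumN 2 (fun a => (xc a x1 x2 / t * pd 0 u t x1 x2 + pds a u t x1 x2) ^ 2)
  + c ^ 2 * (u t x1 x2) ^ 2.

Section EQ.
Variables (c : R) (N : nat) (v : nat -> fn) (Q : nat -> nat -> nat -> fn).

Definition P (i j k : nat) : fn := fun t x1 x2 => - (1/3) * Q i j k t x1 x2.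

Definition w (i : nat) : fn := fun t x1 x2 =>
  v i t x1 x2 + sumN N (fun j => sumN N (fun k =>
     P i j k t x1 x2 * ts2 t x1 x2 * v j t x1 x2 * v k t x1 x2)).

Definition V0 (i : nat) : fn := fun t x1 x2 =>
  1/2 * sumN 3 (fun alpha => (pd alpha (w i) t x1 x2) ^ 2)
  + 1/2 * c ^ 2 * (w i t x1 x2) ^ 2
  + sumN N (fun j => sumN N (fun k =>
      P i j k t x1 x2 * ts2 t x1 x2 * v i t x1 x2 *
      (pd 0 (v j) t x1 x2 * pd 0 (v k) t x1 x2
       + sumN 2 (fun a => pds a (v j) t x1 x2 * pds a (v k) t x1 x2)
       + c ^ 2 * v j t x1 x2 * v k t x1 x2))).

(* V_i^a, defined through  -V_i^a = ... ; a encoded as a-1 in {0,1} *)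
Definition Va (i a : nat) : fn := fun t x1 x2 =>
  - (pd 0 (w i) t x1 x2 * pds a (w i) t x1 x2
     + sumN N (fun j => sumN N (fun k =>
         P i j k t x1 x2 * ts2 t x1 x2 * v i t x1 x2 *
         (pd 0 (v j) t x1 x2 * pds a (v k) t x1 x2
          + pd 0 (v k) t x1 x2 * pds a (v j) t x1 x2)))).

Definition e_Qc : fn := fun t x1 x2 =>
  2 * sumN N (fun i => V0 i t x1 x2
        - sumN 2 (fun a => xc a x1 x2 / t * Va i a t x1 x2)).

End EQ.

From Stdlib Require Import Reals Lra Lia.
From Coquelicot Require Import Coquelicot.
Open Scope R_scope.

(** Write [Z_0 = (s/t) d_t], [Z_a = (x^a/t) d_t + d_a] for the hyperboloidal frame.
    Then [e_c[u]] is the sum of the squares of the four components [Z_0 u], [Z_1 u],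
    [Z_2 u], [c u], and, because [(s/t)^2 + (x^1/t)^2 + (x^2/t)^2 = 1], polarising
    this sum of squares shows that [e_{Q,c}[v]] equals [sum_i e_c[w_i]] plus
    [2 P_i^{jk} (t/s)^2 v_i] times the polarised energy of [(v_j, v_k)].  On the cone
    [t > r + 1] every [Z_m] maps [(t/s)^2] to [(t/s)^2] times a factor of size at most
    [2], so by the Leibniz rule the components of [w_i] and of [v_i] differ by
    [O(N^2 eps sqrt E)] with [E = sum_i e_c[v_i]].  Hence [|e_{Q,c}[v] - E| <= 3/4 E]
    once [eps] is small, and both inequalities follow. *)

Lemma sumN_ext n f g :
  (forall k, (k < n)%nat -> f k = g k) -> sumN n f = sumN n g.
Proof.
  induction n as [|n IH]; intros Hfg; simpl; [reflexivity|].
  rewrite IH, Hfg; [reflexivity | lia | intros k Hk; apply Hfg; lia].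
Qed.

Lemma sumN_plus n f g : sumN n (fun k => f k + g k) = sumN n f + sumN n g.
Proof. induction n as [|n IH]; simpl; [ring | rewrite IH; ring]. Qed.

Lemma sumN_minus n f g : sumN n (fun k => f k - g k) = sumN n f - sumN n g.
Proof. induction n as [|n IH]; simpl; [ring | rewrite IH; ring]. Qed.

Lemma sumN_mult_l n a f : sumN n (fun k => a * f k) = a * sumN n f.
Proof. induction n as [|n IH]; simpl; [ring | rewrite IH; ring]. Qed.

Lemma sumN_swap n m (F : nat -> nat -> R) :
  sumN n (fun a => sumN m (fun b => F a b)) = sumN m (fun b => sumN n (fun a => F a b)).
Proof.
  induction n as [|n IH]; simpl.
  - induction m as [|m IHm]; simpl; [reflexivity | rewrite <- IHm; ring].
  - rewrite IH, <- sumN_plus. reflexivity.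
Qed.

Lemma sumN_nonneg n f : (forall k, (k < n)%nat -> 0 <= f k) -> 0 <= sumN n f.
Proof.
  induction n as [|n IH]; intros Hf; simpl; [lra|].
  assert (0 <= sumN n f) by (apply IH; intros; apply Hf; lia).
  assert (0 <= f n) by (apply Hf; lia).
  lra.
Qed.

Lemma sumN_le_term n f i :
  (forall k, (k < n)%nat -> 0 <= f k) -> (i < n)%nat -> f i <= sumN n f.
Proof.
  induction n as [|n IH]; intros Hf Hi; simpl; [lia|].
  assert (0 <= sumN n f) by (apply sumN_nonneg; intros; apply Hf; lia).
  destruct (Nat.eq_dec i n) as [->|Hne]; [lra|].
  assert (f i <= sumN n f) by (apply IH; [intros; apply Hf|]; lia).
  assert (0 <= f n) by (apply Hf; lia).
  lra.
Qed.

Lemma Rabs_sumN_le n f B :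
  (forall k, (k < n)%nat -> Rabs (f k) <= B) -> Rabs (sumN n f) <= INR n * B.
Proof.
  induction n as [|n IH]; intros Hf; simpl sumN.
  - rewrite Rabs_R0; simpl; lra.
  - rewrite S_INR. eapply Rle_trans; [apply Rabs_triang|].
    assert (Rabs (sumN n f) <= INR n * B) by (apply IH; intros; apply Hf; lia).
    assert (Rabs (f n) <= B) by (apply Hf; lia).
    lra.
Qed.

Lemma Rabs_mult_le a b A B : Rabs a <= A -> Rabs b <= B -> Rabs (a * b) <= A * B.
Proof. intros. rewrite Rabs_mult. apply Rmult_le_compat; auto using Rabs_pos. Qed.

Lemma Rabs_sumN_mult_le n (a g : nat -> R) B :
  (forall k, (k < n)%nat -> Rabs (g k) <= B) ->
  Rabs (sumN n (fun k => a k * g k)) <= sumN n (fun k => Rabs (a k)) * B.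
Proof.
  induction n as [|n IH]; intros Hg; simpl sumN.
  - rewrite Rabs_R0; lra.
  - eapply Rle_trans; [apply Rabs_triang|].
    assert (Rabs (sumN n (fun k => a k * g k)) <= sumN n (fun k => Rabs (a k)) * B)
      by (apply IH; intros; apply Hg; lia).
    assert (Rabs (a n * g n) <= Rabs (a n) * B)
      by (apply Rabs_mult_le; [lra | apply Hg; lia]).
    lra.
Qed.

Lemma is_derive_sumN n (f : nat -> R -> R) (df : nat -> R) y :
  (forall k, (k < n)%nat -> is_derive (f k) y (df k)) ->
  is_derive (fun z => sumN n (fun k => f k z)) y (sumN n df).
Proof.
  induction n as [|n IH]; intros Hf; simpl.
  - apply (is_derive_const 0).

  - apply (is_derive_plus (fun z => sumN n (fun k => f k z)) (f n)).
    + apply IH; intros; apply Hf; lia.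
    + apply Hf; lia.
Qed.

Lemma sumN_mult_sumN2 n N (a : nat -> R) (F : nat -> nat -> nat -> R) :
  sumN n (fun l => a l * sumN N (fun j => sumN N (fun k => F l j k)))
  = sumN N (fun j => sumN N (fun k => sumN n (fun l => a l * F l j k))).
Proof.
  rewrite (sumN_ext n _ (fun l => sumN N (fun j => sumN N (fun k => a l * F l j k)))).
  - rewrite sumN_swap. apply sumN_ext; intros j _. apply sumN_swap.
  - intros l _. rewrite <- sumN_mult_l. apply sumN_ext; intros j _.
    symmetry; apply sumN_mult_l.
Qed.

(** * Frame derivatives of the corrected unknowns *)

Definition coord (alpha : nat) (t x1 x2 : R) : R :=
  match alpha with O => t | 1%nat => x1 | _ => x2 end.

Definition slice (alpha : nat) (f : fn) (t x1 x2 : R) : R -> R :=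
  match alpha with
  | O => fun z => f z x1 x2
  | 1%nat => fun z => f t z x2
  | _ => fun z => f t x1 z
  end.

Lemma pderivable_slice alpha f t x1 x2 :
  pderivable f t x1 x2 -> ex_derive (slice alpha f t x1 x2) (coord alpha t x1 x2).
Proof. intros (H0 & H1 & H2). destruct alpha as [|[|alpha]]; assumption. Qed.

Lemma is_derive_quadratic_correction N (u0 th : R -> R) (q : nat -> nat -> R -> R)
    (u : nat -> R -> R) y :
  ex_derive u0 y -> ex_derive th y ->
  (forall j k, (j < N)%nat -> (k < N)%nat -> ex_derive (q j k) y) ->
  (forall j, (j < N)%nat -> ex_derive (u j) y) ->
  is_derive
    (fun z => u0 z + sumN N (fun j => sumN N (fun k =>
       - (1/3) * q j k z * th z * u j z * u k z))) y
    (Derive u0 y + sumN N (fun j => sumN N (fun k =>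
       - (1/3) * (Derive (q j k) y * th y * u j y * u k y
                  + q j k y * Derive th y * u j y * u k y
                  + q j k y * th y * Derive (u j) y * u k y
                  + q j k y * th y * u j y * Derive (u k) y)))).
Proof.
  intros Hu0 Hth Hq Hu.
  apply (is_derive_plus u0); [now apply Derive_correct|].
  apply is_derive_sumN; intros j Hj.
  apply is_derive_sumN; intros k Hk.
  auto_derive; [repeat split; auto|].
  change (fun x => q j k x) with (q j k); change (fun x => th x) with th;
  change (fun x => u j x) with (u j); change (fun x => u k x) with (u k).
  ring.
Qed.

Lemma pd_w alpha N v Q i t x1 x2 :
  pderivable ts2 t x1 x2 ->
  (forall j, (j < N)%nat -> pderivable (v j) t x1 x2) ->
  (forall j k, (j < N)%nat -> (k < N)%nat -> pderivable (Q i j k) t x1 x2) ->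
  (i < N)%nat ->
  pd alpha (w N v Q i) t x1 x2 = pd alpha (v i) t x1 x2 + sumN N (fun j => sumN N (fun k =>
    - (1/3) * (pd alpha (Q i j k) t x1 x2 * ts2 t x1 x2 * v j t x1 x2 * v k t x1 x2
               + Q i j k t x1 x2 * pd alpha ts2 t x1 x2 * v j t x1 x2 * v k t x1 x2
               + Q i j k t x1 x2 * ts2 t x1 x2 * pd alpha (v j) t x1 x2 * v k t x1 x2
               + Q i j k t x1 x2 * ts2 t x1 x2 * v j t x1 x2 * pd alpha (v k) t x1 x2))).
Proof.
  intros Hth Hv HQ Hi.
  pose proof (is_derive_unique _ _ _ (is_derive_quadratic_correction N
    (slice alpha (v i) t x1 x2) (slice alpha ts2 t x1 x2)
    (fun j k => slice alpha (Q i j k) t x1 x2) (fun j => slice alpha (v j) t x1 x2)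
    (coord alpha t x1 x2)
    (pderivable_slice _ _ _ _ _ (Hv i Hi)) (pderivable_slice _ _ _ _ _ Hth)
    (fun j k Hj Hk => pderivable_slice _ _ _ _ _ (HQ j k Hj Hk))
    (fun j Hj => pderivable_slice _ _ _ _ _ (Hv j Hj)))) as Hd.
  (* For a numeral [alpha], [pd alpha] is [Derive] along [slice alpha] by conversion. *)
  destruct alpha as [|[|alpha]]; exact Hd.
Qed.

(* Row [m] lists the coefficients of [Z_m] on [(d_t, d_1, d_2)]. *)
Definition hframe (m alpha : nat) (t x1 x2 : R) : R :=
  match m, alpha with
  | O, O => sh t x1 x2 / t
  | 1%nat, O => x1 / t
  | 1%nat, 1%nat => 1
  | 2%nat, O => x2 / t
  | 2%nat, 2%nat => 1
  | _, _ => 0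
  end.

Definition hder (m : nat) (f : fn) : fn := fun t x1 x2 =>
  sumN 3 (fun alpha => hframe m alpha t x1 x2 * pd alpha f t x1 x2).

Lemma hder_w m N v Q i t x1 x2 :
  pderivable ts2 t x1 x2 ->
  (forall j, (j < N)%nat -> pderivable (v j) t x1 x2) ->
  (forall j k, (j < N)%nat -> (k < N)%nat -> pderivable (Q i j k) t x1 x2) ->
  (i < N)%nat ->
  hder m (w N v Q i) t x1 x2 = hder m (v i) t x1 x2 + sumN N (fun j => sumN N (fun k =>
    - (1/3) * (hder m (Q i j k) t x1 x2 * ts2 t x1 x2 * v j t x1 x2 * v k t x1 x2
               + Q i j k t x1 x2 * hder m ts2 t x1 x2 * v j t x1 x2 * v k t x1 x2
               + Q i j k t x1 x2 * ts2 t x1 x2 * hder m (v j) t x1 x2 * v k t x1 x2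
               + Q i j k t x1 x2 * ts2 t x1 x2 * v j t x1 x2 * hder m (v k) t x1 x2))).
Proof.
  intros Hth Hv HQ Hi. unfold hder at 1.
  erewrite sumN_ext
    by (intros alpha _; rewrite pd_w by auto; rewrite Rmult_plus_distr_l; reflexivity).
  rewrite sumN_plus, sumN_mult_sumN2. f_equal.
  apply sumN_ext; intros j _; apply sumN_ext; intros k _.
  unfold hder; cbn [sumN]; ring.
Qed.

(** * The energies as sums of squares *)

Definition energy_comp (c : R) (u : fn) (m : nat) : fn := fun t x1 x2 =>
  if Nat.ltb m 3 then hder m u t x1 x2 else c * u t x1 x2.

Definition energy_form (c : R) (f g : fn) : fn := fun t x1 x2 =>
  sumN 4 (fun m => energy_comp c f m t x1 x2 * energy_comp c g m t x1 x2).

Definition flat_form (c : R) (f g : fn) : fn := fun t x1 x2 =>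
  pd 0 f t x1 x2 * pd 0 g t x1 x2
  + sumN 2 (fun a => pds a f t x1 x2 * pds a g t x1 x2)
  + c ^ 2 * f t x1 x2 * g t x1 x2.

Definition flux_form (a : nat) (f g : fn) : fn := fun t x1 x2 =>
  pd 0 f t x1 x2 * pds a g t x1 x2 + pd 0 g t x1 x2 * pds a f t x1 x2.

Lemma e_c_energy_form c u t x1 x2 : e_c c u t x1 x2 = energy_form c u u t x1 x2.
Proof. unfold e_c, energy_form, energy_comp, hder, hframe, pds; cbn; ring. Qed.

Lemma energy_comp_sq_le c u m t x1 x2 :
  (m < 4)%nat -> energy_comp c u m t x1 x2 ^ 2 <= e_c c u t x1 x2.
Proof.
  intros Hm. rewrite e_c_energy_form. unfold energy_form.
  rewrite <- Rsqr_pow2.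
  apply (sumN_le_term 4 (fun m => energy_comp c u m t x1 x2 * energy_comp c u m t x1 x2));
    [intros; apply Rle_0_sqr | exact Hm].
Qed.

Lemma hframe_unit t x1 x2 :
  t <> 0 -> 0 <= t ^ 2 - x1 ^ 2 - x2 ^ 2 ->
  (sh t x1 x2 / t) ^ 2 + (x1 / t) ^ 2 + (x2 / t) ^ 2 = 1.
Proof.
  intros Ht HD. unfold sh, Rdiv. rewrite !Rpow_mult_distr, pow2_sqrt by exact HD.
  field. exact Ht.
Qed.

Lemma energy_form_expand c f g t x1 x2 :
  t <> 0 -> 0 <= t ^ 2 - x1 ^ 2 - x2 ^ 2 ->
  energy_form c f g t x1 x2 = flat_form c f g t x1 x2
    + (x1 / t * flux_form 0 f g t x1 x2 + x2 / t * flux_form 1 f g t x1 x2).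
Proof.
  intros Ht HD.
  transitivity (pd 0 f t x1 x2 * pd 0 g t x1 x2
                  * ((sh t x1 x2 / t) ^ 2 + (x1 / t) ^ 2 + (x2 / t) ^ 2 - 1)
    + flat_form c f g t x1 x2
    + (x1 / t * flux_form 0 f g t x1 x2 + x2 / t * flux_form 1 f g t x1 x2)).
  - cbv beta iota delta [energy_form energy_comp flat_form flux_form hder hframe
      sumN Nat.ltb Nat.leb pds].
    ring.
  - rewrite hframe_unit by assumption. ring.
Qed.

Lemma V0_flat_form c N v Q i t x1 x2 :
  V0 c N v Q i t x1 x2 = 1/2 * flat_form c (w N v Q i) (w N v Q i) t x1 x2
    + sumN N (fun j => sumN N (fun k =>
        P Q i j k t x1 x2 * ts2 t x1 x2 * v i t x1 x2 * flat_form c (v j) (v k) t x1 x2)).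
Proof. unfold V0, flat_form, pds; cbn [sumN]; ring. Qed.

Lemma Va_flux_form N v Q i a t x1 x2 :
  Va N v Q i a t x1 x2 = - (1/2 * flux_form a (w N v Q i) (w N v Q i) t x1 x2
    + sumN N (fun j => sumN N (fun k =>
        P Q i j k t x1 x2 * ts2 t x1 x2 * v i t x1 x2 * flux_form a (v j) (v k) t x1 x2))).
Proof. unfold Va, flux_form; cbv beta. field. Qed.

Lemma sumN2_energy_form_expand c N (u : nat -> fn) (X : nat -> nat -> R) t x1 x2 :
  t <> 0 -> 0 <= t ^ 2 - x1 ^ 2 - x2 ^ 2 ->
  sumN N (fun j => sumN N (fun k => X j k * energy_form c (u j) (u k) t x1 x2))
  = sumN N (fun j => sumN N (fun k => X j k * flat_form c (u j) (u k) t x1 x2))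
    + (x1 / t * sumN N (fun j => sumN N (fun k => X j k * flux_form 0 (u j) (u k) t x1 x2))
       + x2 / t * sumN N (fun j => sumN N (fun k => X j k * flux_form 1 (u j) (u k) t x1 x2))).
Proof.
  intros Ht HD.
  rewrite <- !sumN_mult_l, <- !sumN_plus. apply sumN_ext; intros j _.
  rewrite <- !sumN_mult_l, <- !sumN_plus. apply sumN_ext; intros k _.
  rewrite energy_form_expand by assumption. ring.
Qed.

Lemma e_Qc_energy_form c N v Q t x1 x2 :
  t <> 0 -> 0 <= t ^ 2 - x1 ^ 2 - x2 ^ 2 ->
  e_Qc c N v Q t x1 x2 = sumN N (fun i =>
    energy_form c (w N v Q i) (w N v Q i) t x1 x2
    + 2 * sumN N (fun j => sumN N (fun k =>
        P Q i j k t x1 x2 * ts2 t x1 x2 * v i t x1 x2 * energy_form c (v j) (v k) t x1 x2))).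
Proof.
  intros Ht HD. unfold e_Qc. rewrite <- sumN_mult_l. apply sumN_ext; intros i _.
  rewrite V0_flat_form, sumN2_energy_form_expand, energy_form_expand by assumption.
  cbn [sumN xc]. rewrite !Va_flux_form. field. exact Ht.
Qed.

(** * The weight (t/s)^2 on the cone *)

Lemma is_derive_sq_div_sqrt (a g : R -> R) y da dg :
  is_derive a y da -> is_derive g y dg -> 0 < g y ->
  is_derive (fun z => (a z / sqrt (g z)) ^ 2) y
    (2 * a y * da / g y - a y ^ 2 * dg / g y ^ 2).
Proof.
  intros Ha Hg Hpos.
  assert (Hq : 0 < sqrt (g y)) by (apply sqrt_lt_R0; exact Hpos).
  auto_derive.
  - repeat split; [eexists; eassumption | eexists; eassumption | exact Hpos | lra].
  - change (fun x => a x) with a; change (fun x => g x) with g.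
    rewrite (is_derive_unique _ _ _ Ha), (is_derive_unique _ _ _ Hg).
    assert (Hqq : sqrt (g y) * sqrt (g y) = g y) by (apply sqrt_sqrt; lra).
    set (q := sqrt (g y)) in *. rewrite <- Hqq.
    field. lra.
Qed.

Lemma is_derive_ts2 t x1 x2 : 0 < t ^ 2 - x1 ^ 2 - x2 ^ 2 ->
  is_derive (fun z => ts2 z x1 x2) t
    (- 2 * t * (x1 ^ 2 + x2 ^ 2) / (t ^ 2 - x1 ^ 2 - x2 ^ 2) ^ 2) /\
  is_derive (fun z => ts2 t z x2) x1 (2 * t ^ 2 * x1 / (t ^ 2 - x1 ^ 2 - x2 ^ 2) ^ 2) /\
  is_derive (fun z => ts2 t x1 z) x2 (2 * t ^ 2 * x2 / (t ^ 2 - x1 ^ 2 - x2 ^ 2) ^ 2).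
Proof.
  intros HD. assert (HD0 : t ^ 2 - x1 ^ 2 - x2 ^ 2 <> 0) by lra. split; [|split].
  - replace (- 2 * t * (x1 ^ 2 + x2 ^ 2) / (t ^ 2 - x1 ^ 2 - x2 ^ 2) ^ 2)
      with (2 * t * 1 / (t ^ 2 - x1 ^ 2 - x2 ^ 2)
            - t ^ 2 * (2 * t) / (t ^ 2 - x1 ^ 2 - x2 ^ 2) ^ 2) by (field; exact HD0).
    apply (is_derive_sq_div_sqrt (fun z => z) (fun z => z ^ 2 - x1 ^ 2 - x2 ^ 2) t 1 (2 * t));
      [auto_derive; auto; ring.. | exact HD].
  - replace (2 * t ^ 2 * x1 / (t ^ 2 - x1 ^ 2 - x2 ^ 2) ^ 2)
      with (2 * t * 0 / (t ^ 2 - x1 ^ 2 - x2 ^ 2)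
            - t ^ 2 * (- 2 * x1) / (t ^ 2 - x1 ^ 2 - x2 ^ 2) ^ 2) by (field; exact HD0).
    apply (is_derive_sq_div_sqrt (fun _ => t) (fun z => t ^ 2 - z ^ 2 - x2 ^ 2) x1 0 (- 2 * x1));
      [auto_derive; auto; ring.. | exact HD].
  - replace (2 * t ^ 2 * x2 / (t ^ 2 - x1 ^ 2 - x2 ^ 2) ^ 2)
      with (2 * t * 0 / (t ^ 2 - x1 ^ 2 - x2 ^ 2)
            - t ^ 2 * (- 2 * x2) / (t ^ 2 - x1 ^ 2 - x2 ^ 2) ^ 2) by (field; exact HD0).
    apply (is_derive_sq_div_sqrt (fun _ => t) (fun z => t ^ 2 - x1 ^ 2 - z ^ 2) x2 0 (- 2 * x2));
      [auto_derive; auto; ring.. | exact HD].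
Qed.

Lemma Rabs_div_le_1 x y : 0 < y -> Rabs x <= y -> Rabs (x / y) <= 1.
Proof.
  intros Hy Hx. unfold Rdiv. rewrite Rabs_mult, Rabs_inv, (Rabs_pos_eq y) by lra.
  apply (Rmult_le_reg_r y); [exact Hy|].
  rewrite Rmult_assoc, Rinv_l by lra. lra.
Qed.

Section Cone.

Variables t x1 x2 : R.
Hypothesis Hcone : rad x1 x2 + 1 < t.

Lemma cone_gt1 : 1 < t.
Proof. pose proof (sqrt_pos (x1 ^ 2 + x2 ^ 2)). unfold rad in Hcone. lra. Qed.

Lemma cone_hyperbolic : 1 < t ^ 2 - x1 ^ 2 - x2 ^ 2.
Proof.
  pose proof (sqrt_pos (x1 ^ 2 + x2 ^ 2)).
  assert (rad x1 x2 * rad x1 x2 = x1 ^ 2 + x2 ^ 2)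
    by (apply sqrt_sqrt; nra).
  unfold rad in *. nra.
Qed.

Lemma cone_sh_bounds : 1 < sh t x1 x2 <= t.
Proof.
  pose proof cone_gt1; pose proof cone_hyperbolic.
  pose proof (sqrt_pos (t ^ 2 - x1 ^ 2 - x2 ^ 2)).
  assert (sh t x1 x2 * sh t x1 x2 = t ^ 2 - x1 ^ 2 - x2 ^ 2) by (apply sqrt_sqrt; lra).
  unfold sh in *. split; nra.
Qed.

Lemma cone_abs_x1 : Rabs x1 <= t.
Proof. pose proof cone_gt1; pose proof cone_hyperbolic. apply Rabs_le; split; nra. Qed.

Lemma cone_abs_x2 : Rabs x2 <= t.
Proof. pose proof cone_gt1; pose proof cone_hyperbolic. apply Rabs_le; split; nra. Qed.

Lemma hframe_abs_sum_le m : sumN 3 (fun alpha => Rabs (hframe m alpha t x1 x2)) <= 2.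
Proof.
  pose proof cone_gt1; pose proof cone_sh_bounds.
  assert (Rabs (sh t x1 x2 / t) <= 1) by (apply Rabs_div_le_1; [lra | rewrite Rabs_pos_eq; lra]).
  assert (Rabs (x1 / t) <= 1) by (apply Rabs_div_le_1; [lra | apply cone_abs_x1]).
  assert (Rabs (x2 / t) <= 1) by (apply Rabs_div_le_1; [lra | apply cone_abs_x2]).
  destruct m as [|[|[|m]]]; cbn [sumN hframe]; rewrite ?Rabs_R0, ?Rabs_R1; lra.
Qed.

Lemma pderivable_ts2 : pderivable ts2 t x1 x2.
Proof.
  destruct (is_derive_ts2 t x1 x2) as (H0 & H1 & H2); [pose proof cone_hyperbolic; lra|].
  repeat split; eexists; eassumption.
Qed.

Lemma hder_ts2 m : exists kappa, Rabs kappa <= 2 /\ hder m ts2 t x1 x2 = ts2 t x1 x2 * kappa.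
Proof.
  pose proof cone_gt1 as Ht; pose proof cone_hyperbolic as HD;
    pose proof cone_sh_bounds as Hs.
  destruct (is_derive_ts2 t x1 x2) as (H0 & H1 & H2); [lra|].
  assert (E0 : pd 0 ts2 t x1 x2 = - 2 * t * (x1 ^ 2 + x2 ^ 2) / (t ^ 2 - x1 ^ 2 - x2 ^ 2) ^ 2)
    by exact (is_derive_unique _ _ _ H0).
  assert (E1 : pd 1 ts2 t x1 x2 = 2 * t ^ 2 * x1 / (t ^ 2 - x1 ^ 2 - x2 ^ 2) ^ 2)
    by exact (is_derive_unique _ _ _ H1).
  assert (E2 : pd 2 ts2 t x1 x2 = 2 * t ^ 2 * x2 / (t ^ 2 - x1 ^ 2 - x2 ^ 2) ^ 2)
    by exact (is_derive_unique _ _ _ H2).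
  assert (Hss : sh t x1 x2 ^ 2 = t ^ 2 - x1 ^ 2 - x2 ^ 2) by (apply pow2_sqrt; lra).
  assert (Hts2 : ts2 t x1 x2 = t ^ 2 / sh t x1 x2 ^ 2) by (unfold ts2; field; lra).
  unfold hder; destruct m as [|[|[|m]]]; cbn [sumN hframe]; rewrite ?E0, ?E1, ?E2, Hts2.
  - exists (- (2 * ((x1 ^ 2 + x2 ^ 2) / (t ^ 2 * sh t x1 x2)))). split.
    + rewrite Rabs_Ropp, Rabs_mult, (Rabs_pos_eq 2) by lra.
      enough (Rabs ((x1 ^ 2 + x2 ^ 2) / (t ^ 2 * sh t x1 x2)) <= 1) by lra.
      apply Rabs_div_le_1; [nra | rewrite Rabs_pos_eq; nra].
    + rewrite <- Hss. field. lra.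
  - exists (2 * (x1 / t ^ 2)). split.
    + enough (Rabs (x1 / t ^ 2) <= 1) by (rewrite Rabs_mult, (Rabs_pos_eq 2); lra).
      apply Rabs_div_le_1; [nra|]. pose proof cone_abs_x1. nra.
    + rewrite Hss. field. lra.
  - exists (2 * (x2 / t ^ 2)). split.
    + enough (Rabs (x2 / t ^ 2) <= 1) by (rewrite Rabs_mult, (Rabs_pos_eq 2); lra).
      apply Rabs_div_le_1; [nra|]. pose proof cone_abs_x2. nra.
    + rewrite Hss. field. lra.
  - exists 0. split; [rewrite Rabs_R0; lra | ring].
Qed.

End Cone.

(** * The perturbation estimate *)

Lemma e_c_nonneg c u t x1 x2 : 0 <= e_c c u t x1 x2.
Proof.
  eapply Rle_trans; [apply pow2_ge_0 | apply (energy_comp_sq_le c u 0)]. lia.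
Qed.

Lemma energy_comp_le_sqrt_energy c N (u : nat -> fn) j m t x1 x2 :
  (j < N)%nat -> (m < 4)%nat ->
  Rabs (energy_comp c (u j) m t x1 x2) <= sqrt (sumN N (fun i => e_c c (u i) t x1 x2)).
Proof.
  intros Hj Hm. rewrite <- sqrt_Rsqr_abs. apply sqrt_le_1_alt.
  rewrite Rsqr_pow2. eapply Rle_trans; [apply energy_comp_sq_le; exact Hm|].
  apply (sumN_le_term N (fun i => e_c c (u i) t x1 x2)); [intros; apply e_c_nonneg | exact Hj].
Qed.

Lemma Rabs_sq_sub_le x y d S :
  Rabs (y - x) <= d -> Rabs x <= S -> Rabs (y * y - x * x) <= d * (d + 2 * S).
Proof.
  intros Hd HS. replace (y * y - x * x) with ((y - x) * ((y - x) + 2 * x)) by ring.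
  apply Rabs_mult_le; [exact Hd|].
  eapply Rle_trans; [apply Rabs_triang|].
  rewrite Rabs_mult, (Rabs_pos_eq 2) by lra. lra.
Qed.

Lemma correction_term_bound eps S B th q a b zq zth za zb kappa :
  zth = th * kappa -> Rabs kappa <= 2 ->
  Rabs (th * a * zq) <= 2 * eps -> Rabs (th * q * a) <= eps -> Rabs (th * q * b) <= eps ->
  Rabs b <= B -> Rabs za <= S -> Rabs zb <= S ->
  Rabs (- (1/3) * (zq * th * a * b + q * zth * a * b + q * th * za * b + q * th * a * zb))
    <= eps * (S + 2 * B).
Proof.
  intros -> Hk Hzq Ha Hb HB Hza Hzb.
  assert (0 <= eps) by (eapply Rle_trans; [apply Rabs_pos | exact Ha]).
  assert (0 <= eps * S)
    by (apply Rmult_le_pos; [|eapply Rle_trans; [apply Rabs_pos | exact Hza]]; lra).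
  assert (0 <= eps * B)
    by (apply Rmult_le_pos; [|eapply Rle_trans; [apply Rabs_pos | exact HB]]; lra).
  assert (T1 : Rabs (th * a * zq * b) <= 2 * eps * B) by (apply Rabs_mult_le; auto).
  assert (T2 : Rabs (th * q * a * kappa * b) <= eps * 2 * B)
    by (apply Rabs_mult_le; [apply Rabs_mult_le|]; auto).
  assert (T3 : Rabs (th * q * b * za) <= eps * S) by (apply Rabs_mult_le; auto).
  assert (T4 : Rabs (th * q * a * zb) <= eps * S) by (apply Rabs_mult_le; auto).
  replace (zq * th * a * b + q * (th * kappa) * a * b + q * th * za * b + q * th * a * zb)
    with (th * a * zq * b + th * q * a * kappa * b + th * q * b * za + th * q * a * zb)
    by ring.
  rewrite Rabs_mult, Rabs_Ropp, (Rabs_pos_eq (1/3)) by lra.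
  pose proof (Rabs_triang (th * a * zq * b + th * q * a * kappa * b + th * q * b * za)
                          (th * q * a * zb)).
  pose proof (Rabs_triang (th * a * zq * b + th * q * a * kappa * b) (th * q * b * za)).
  pose proof (Rabs_triang (th * a * zq * b) (th * q * a * kappa * b)).
  lra.
Qed.

Section Perturbation.

Variables (c : R) (N : nat) (v : nat -> fn) (Q : nat -> nat -> nat -> fn).
Variables (t x1 x2 eps S : R).

Hypothesis Hc : 0 < c.
Hypothesis Hcone : rad x1 x2 + 1 < t.
Hypothesis Hv : forall j, (j < N)%nat -> pderivable (v j) t x1 x2.
Hypothesis HQ : forall i j k, (i < N)%nat -> (j < N)%nat -> (k < N)%nat ->
  pderivable (Q i j k) t x1 x2.
Hypothesis Hsmall : forall i j k, (i < N)%nat -> (j < N)%nat -> (k < N)%nat ->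
  Rabs (ts2 t x1 x2 * Q i j k t x1 x2 * v i t x1 x2)
  + Rabs (ts2 t x1 x2 * Q i j k t x1 x2 * v j t x1 x2)
  + Rabs (ts2 t x1 x2 * Q i j k t x1 x2 * v k t x1 x2) <= eps
  /\ forall alpha, (alpha < 3)%nat ->
       Rabs (ts2 t x1 x2 * v j t x1 x2 * pd alpha (Q i j k) t x1 x2)
       + Rabs (ts2 t x1 x2 * v k t x1 x2 * pd alpha (Q i j k) t x1 x2) <= eps.
Hypothesis HS : forall j m, (j < N)%nat -> (m < 4)%nat ->
  Rabs (energy_comp c (v j) m t x1 x2) <= S.

Lemma Rabs_v_le j : (j < N)%nat -> Rabs (v j t x1 x2) <= S / c.
Proof.
  intros Hj. pose proof (HS j 3 Hj ltac:(lia)) as H3.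
  unfold energy_comp in H3; cbn in H3.
  rewrite Rabs_mult, (Rabs_pos_eq c) in H3 by lra.
  apply (Rmult_le_reg_l c); [exact Hc|]. unfold Rdiv.
  rewrite <- Rmult_assoc, (Rmult_comm c S), Rmult_assoc, Rinv_r, Rmult_1_r by lra.
  exact H3.
Qed.

Lemma Rabs_hder_v_le j m : (j < N)%nat -> (m < 3)%nat -> Rabs (hder m (v j) t x1 x2) <= S.
Proof.
  intros Hj Hm. pose proof (HS j m Hj ltac:(lia)) as H.
  unfold energy_comp in H. rewrite (proj2 (Nat.ltb_lt m 3) Hm) in H. exact H.
Qed.

Lemma Rabs_ts2_v_hder_Q_le i j k m : (i < N)%nat -> (j < N)%nat -> (k < N)%nat ->
  Rabs (ts2 t x1 x2 * v j t x1 x2 * hder m (Q i j k) t x1 x2) <= 2 * eps.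
Proof.
  intros Hi Hj Hk. destruct (Hsmall i j k Hi Hj Hk) as [_ Hdq].
  assert (Hdq' : forall alpha, (alpha < 3)%nat ->
            Rabs (ts2 t x1 x2 * v j t x1 x2 * pd alpha (Q i j k) t x1 x2) <= eps).
  { intros alpha Ha. specialize (Hdq alpha Ha).
    pose proof (Rabs_pos (ts2 t x1 x2 * v k t x1 x2 * pd alpha (Q i j k) t x1 x2)). lra. }
  assert (0 <= eps) by (eapply Rle_trans; [apply Rabs_pos | apply (Hdq' 0%nat); lia]).
  replace (ts2 t x1 x2 * v j t x1 x2 * hder m (Q i j k) t x1 x2)
    with (sumN 3 (fun alpha => hframe m alpha t x1 x2
                    * (ts2 t x1 x2 * v j t x1 x2 * pd alpha (Q i j k) t x1 x2)))
    by (unfold hder; cbn [sumN]; ring).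
  eapply Rle_trans; [apply Rabs_sumN_mult_le; exact Hdq'|].
  apply Rmult_le_compat_r; [lra|].
  apply hframe_abs_sum_le, Hcone.
Qed.

Lemma energy_comp_w_sub_le i m : (i < N)%nat -> (m < 4)%nat ->
  Rabs (energy_comp c (w N v Q i) m t x1 x2 - energy_comp c (v i) m t x1 x2)
    <= INR N * (INR N * (eps * (S + 2 * (S / c)))).
Proof.
  intros Hi Hm. unfold energy_comp.
  destruct (Nat.ltb_spec m 3) as [Hm3|Hm3].
  - rewrite hder_w by auto using pderivable_ts2.
    destruct (hder_ts2 t x1 x2 Hcone m) as (kappa & Hk & Hth).
    match goal with |- Rabs (?a + ?b - ?a) <= _ => replace (a + b - a) with b by ring end.
    apply Rabs_sumN_le; intros j Hj; apply Rabs_sumN_le; intros k Hk'.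
    destruct (Hsmall i j k Hi Hj Hk') as [Hq _].
    pose proof (Rabs_pos (ts2 t x1 x2 * Q i j k t x1 x2 * v i t x1 x2)).
    pose proof (Rabs_pos (ts2 t x1 x2 * Q i j k t x1 x2 * v j t x1 x2)).
    pose proof (Rabs_pos (ts2 t x1 x2 * Q i j k t x1 x2 * v k t x1 x2)).
    apply (correction_term_bound _ _ _ _ _ _ _ _ _ _ _ kappa Hth Hk);
      auto using Rabs_ts2_v_hder_Q_le, Rabs_v_le, Rabs_hder_v_le; lra.
  - unfold w, P.
    match goal with |- Rabs (c * (?a + ?b) - c * ?a) <= _ =>
      replace (c * (a + b) - c * a) with (c * b) by ring end.
    rewrite <- sumN_mult_l. apply Rabs_sumN_le; intros j Hj.
    rewrite <- sumN_mult_l. apply Rabs_sumN_le; intros k Hk.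
    destruct (Hsmall i j k Hi Hj Hk) as [Hq _].
    pose proof (Rabs_pos (ts2 t x1 x2 * Q i j k t x1 x2 * v i t x1 x2)).
    pose proof (Rabs_pos (ts2 t x1 x2 * Q i j k t x1 x2 * v k t x1 x2)).
    assert (Hvk : Rabs (c * v k t x1 x2) <= S) by exact (HS k 3 Hk ltac:(lia)).
    assert (0 <= S / c) by (eapply Rle_trans; [apply Rabs_pos | apply Rabs_v_le; exact Hk]).
    replace (c * (- (1/3) * Q i j k t x1 x2 * ts2 t x1 x2 * v j t x1 x2 * v k t x1 x2))
      with (- (1/3) * ((ts2 t x1 x2 * Q i j k t x1 x2 * v j t x1 x2) * (c * v k t x1 x2)))
      by ring.
    rewrite Rabs_mult, Rabs_Ropp, (Rabs_pos_eq (1/3)) by lra.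
    assert (Rabs (ts2 t x1 x2 * Q i j k t x1 x2 * v j t x1 x2 * (c * v k t x1 x2)) <= eps * S)
      by (apply Rabs_mult_le; [lra | exact Hvk]).
    assert (0 <= eps * S) by (eapply Rle_trans; [apply Rabs_pos | eassumption]).
    pose proof (Rabs_pos (ts2 t x1 x2 * Q i j k t x1 x2 * v j t x1 x2)).
    assert (0 <= eps * (S / c)) by (apply Rmult_le_pos; lra).
    lra.
Qed.

Lemma e_Qc_sub_e_c_le :
  let d := INR N * (INR N * (eps * (S + 2 * (S / c)))) in
  Rabs (e_Qc c N v Q t x1 x2 - sumN N (fun i => e_c c (v i) t x1 x2))
    <= INR N * (4 * (d * (d + 2 * S)) + 2 * (INR N * (INR N * (eps / 3 * (4 * (S * S)))))).
Proof.
  intros d. pose proof (cone_gt1 t x1 x2 Hcone); pose proof (cone_hyperbolic t x1 x2 Hcone).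
  rewrite e_Qc_energy_form by lra. rewrite <- sumN_minus.
  apply Rabs_sumN_le; intros i Hi. rewrite e_c_energy_form.
  match goal with |- Rabs (?a + 2 * ?b - ?e) <= _ =>
    replace (a + 2 * b - e) with ((a - e) + 2 * b) by ring end.
  eapply Rle_trans; [apply Rabs_triang|]. apply Rplus_le_compat.
  - unfold energy_form. rewrite <- sumN_minus.
    replace 4 with (INR 4) by (simpl; ring).
    apply Rabs_sumN_le; intros m Hm.
    apply Rabs_sq_sub_le; [apply energy_comp_w_sub_le | apply HS]; auto.
  - rewrite Rabs_mult, (Rabs_pos_eq 2) by lra. apply Rmult_le_compat_l; [lra|].
    apply Rabs_sumN_le; intros j Hj. apply Rabs_sumN_le; intros k Hk.
    destruct (Hsmall i j k Hi Hj Hk) as [Hq _].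
    pose proof (Rabs_pos (ts2 t x1 x2 * Q i j k t x1 x2 * v j t x1 x2)).
    pose proof (Rabs_pos (ts2 t x1 x2 * Q i j k t x1 x2 * v k t x1 x2)).
    unfold P.
    replace (- (1/3) * Q i j k t x1 x2 * ts2 t x1 x2 * v i t x1 x2)
      with (- (1/3) * (ts2 t x1 x2 * Q i j k t x1 x2 * v i t x1 x2)) by ring.
    apply Rabs_mult_le.
    + rewrite Rabs_mult, Rabs_Ropp, (Rabs_pos_eq (1/3)) by lra. lra.
    + unfold energy_form. replace 4 with (INR 4) by (simpl; ring).
      apply Rabs_sumN_le; intros m Hm. apply Rabs_mult_le; apply HS; auto.
Qed.

End Perturbation.

Lemma Rabs_sub_le_comparable a b :
  0 <= b -> Rabs (a - b) <= 3/4 * b -> 1/4 * a <= b /\ b <= 4 * a.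
Proof. intros Hb H. apply Rabs_le_between' in H. lra. Qed.

Lemma one_div_100_mul_le x : 1 <= x -> 1 / (100 * x) <= 1 / 100.
Proof.
  intros Hx. unfold Rdiv. apply Rmult_le_compat_l; [lra|].
  apply Rinv_le_contravar; lra.
Qed.

Lemma correction_le_three_quarters n c S :
  1 <= n -> 0 < c -> 0 <= S ->
  let eps := 1 / (100 * n ^ 3 * (1 + 2 / c)) in
  let d := n * (n * (eps * (S + 2 * (S / c)))) in
  n * (4 * (d * (d + 2 * S)) + 2 * (n * (n * (eps / 3 * (4 * (S * S))))))
    <= 3/4 * (S * S).
Proof.
  intros Hn Hc HS eps d.
  assert (HK : 0 < 2 / c) by (apply Rdiv_lt_0_compat; lra).
  assert (Hd : d = S * (1 / (100 * n))) by (unfold d, eps; field; lra).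
  assert (He : n ^ 3 * eps = 1 / (100 * (1 + 2 / c))) by (unfold eps; field; lra).
  pose proof (one_div_100_mul_le n Hn).
  pose proof (one_div_100_mul_le (1 + 2 / c) ltac:(lra)).
  rewrite Hd.
  replace (n * (4 * (S * (1 / (100 * n)) * (S * (1 / (100 * n)) + 2 * S))
             + 2 * (n * (n * (eps / 3 * (4 * (S * S)))))))
    with (S * S * (4 / 100 * (1 / (100 * n) + 2) + 8 / 3 * (n ^ 3 * eps)))
    by (field; lra).
  rewrite He, (Rmult_comm (3/4)).
  apply Rmult_le_compat_l; [nra|].
  assert (0 <= 1 / (100 * n)) by (apply Rlt_le, Rdiv_lt_0_compat; lra).
  nra.
Qed.

Theorem lemma3p1 :
  forall (c : R) (N : nat), 0 < c -> (1 <= N)%nat ->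
  exists eps_s : R, 0 < eps_s /\
  forall (s0 s1 : R) (v : nat -> fn) (Q : nat -> nat -> nat -> fn),
    (* symmetry Q_i^{jk} = Q_i^{kj} *)
    (forall i j k t x1 x2, (i < N)%nat -> (j < N)%nat -> (k < N)%nat ->
       Q i j k t x1 x2 = Q i k j t x1 x2) ->
    (* regularity: all first partial derivatives exist on K *)
    (forall t x1 x2, inK s0 s1 t x1 x2 ->
       (forall i, (i < N)%nat -> pderivable (v i) t x1 x2) /\
       (forall i j k, (i < N)%nat -> (j < N)%nat -> (k < N)%nat ->
          pderivable (Q i j k) t x1 x2)) ->
    (* smallness assumptions, pointwise on K *)
    (forall t x1 x2, inK s0 s1 t x1 x2 ->
       forall i j k, (i < N)%nat -> (j < N)%nat -> (k < N)%nat ->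
         Rabs (ts2 t x1 x2 * Q i j k t x1 x2 * v i t x1 x2)
         + Rabs (ts2 t x1 x2 * Q i j k t x1 x2 * v j t x1 x2)
         + Rabs (ts2 t x1 x2 * Q i j k t x1 x2 * v k t x1 x2) <= eps_s
         /\
         forall alpha, (alpha < 3)%nat ->
           Rabs (ts2 t x1 x2 * v j t x1 x2 * pd alpha (Q i j k) t x1 x2)
           + Rabs (ts2 t x1 x2 * v k t x1 x2 * pd alpha (Q i j k) t x1 x2)
             <= eps_s) ->
    forall t x1 x2, inK s0 s1 t x1 x2 ->
      1/4 * e_Qc c N v Q t x1 x2 <= sumN N (fun i => e_c c (v i) t x1 x2)
      /\ sumN N (fun i => e_c c (v i) t x1 x2) <= 4 * e_Qc c N v Q t x1 x2.
Proof.
  intros c N Hc HN.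
  assert (Hn : 1 <= INR N) by (apply (le_INR 1); exact HN).
  set (eps := 1 / (100 * INR N ^ 3 * (1 + 2 / c))).
  exists eps. split.
  { assert (0 < 2 / c) by (apply Rdiv_lt_0_compat; lra).
    unfold eps. apply Rdiv_lt_0_compat; [lra|].
    apply Rmult_lt_0_compat; [apply Rmult_lt_0_compat; [lra | apply pow_lt]|]; lra. }
  intros s0 s1 v Q _ Hreg Hsmall t x1 x2 HK.
  destruct (Hreg t x1 x2 HK) as [Hv HQ].
  pose proof (Hsmall t x1 x2 HK) as Hsmall_pt.
  destruct HK as [Hcone _].
  set (E := sumN N (fun i => e_c c (v i) t x1 x2)).
  assert (HE : 0 <= E) by (apply sumN_nonneg; intros; apply e_c_nonneg).
  apply Rabs_sub_le_comparable; [exact HE|].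
  eapply Rle_trans.
  - apply (e_Qc_sub_e_c_le c N v Q t x1 x2 eps (sqrt E)); auto.
    intros j m Hj Hm. apply energy_comp_le_sqrt_energy; auto.
  - replace (3/4 * E) with (3/4 * (sqrt E * sqrt E)) by (rewrite sqrt_sqrt; auto).
    exact (correction_le_three_quarters (INR N) c (sqrt E) Hn Hc (sqrt_pos E)).
Qed.
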